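(* For every $p\in[2,\infty]$, \[ D_{p,\infty}=C_{p,\infty}=\mathrm{A}_{\frac{p}{p-1}}, \] (with $\frac{p}{p-1}=1$ when $p=\infty$); equivalently, for every $p\in[1,2]$, $D_{p^*,\infty}=C_{p^*,\infty}=\mathrm{A}_p$.
   Context: Scalars are real. $X_q=\ell_q$ for $1\le q<\infty$, $X_\infty=c_0$, $(e_k)$ canonical unit vectors, $\|T\|$ the sup norm of a bilinear form over the product of unit balls. $r_j(t)=\operatorname{sign}(\sin(2^j\pi t))$ are the Rademacher functions. For $0<r<\infty$, $\mathrm{A}_r$ is the optimal constant in the Khintchine inequality $\left(\sum_{j=1}^n|a_j|^2\right)^{1/2}\le \mathrm{A}_r\left(\int_0^1|\sum_{j=1}^n a_jr_j(t)|^rdt\right)^{1/r}$ for all $n$ and real $a_j$. For $p\in[2,\infty]$: $C_{p,\infty}$ is the optimal $C$ with $\left(\sum_{i}\left(\sum_{j}|T(e_i,e_j)|^2\right)^{\frac{p}{2(p-1)}}\right)^{\frac{p-1}{p}}\le C\|T\|$, and $D_{p,\infty}$ the optimal $D$ with $\left(\sum_{j}\left(\sum_{i}|T(e_i,e_j)|^{\frac{p}{p-1}}\right)^{2\frac{p-1}{p}}\right)^{1/2}\le D\|T\|$, both for all continuous bilinear $T:X_p\times X_\infty\to\mathbb{R}$. *)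

From Stdlib Require Import Reals Lra.
Open Scope R_scope.

Inductive ext : Type := Fin (p : R) | Inf.

Definition p_ge2 (p : ext) : Prop :=
  match p with Fin q => 2 <= q | Inf => True end.

(** Power x^r for x >= 0 and r > 0, with the convention 0^r = 0
    (Stdlib's Rpower 0 r = 1, which is wrong for this purpose). *)
Definition rpow (x r : R) : R :=
  if Req_EM_T x 0 then 0 else Rpower x r.

Fixpoint sumN (N : nat) (f : nat -> R) : R :=
  match N with O => 0 | S n => sumN n f + f n end.

Definition sign (x : R) : R :=
  if Rlt_dec 0 x then 1 else if Rlt_dec x 0 then -1 else 0.
Definition rad (j : nat) (t : R) : R := sign (sin (2 ^ j * PI * t)).

Definition khintchine_ineq (r A : R) : Prop :=
  forall (n : nat) (a : nat -> R)
    (pr : Riemann_integrable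
            (fun t => rpow (Rabs (sumN n (fun k => a (S k) * rad (S k) t))) r) 0 1),
    sqrt (sumN n (fun k => Rabs (a (S k)) ^ 2))
      <= A * rpow (RiemannInt pr) (1 / r).

Definition is_optimal (P : R -> Prop) (A : R) : Prop :=
  P A /\ forall A', P A' -> A <= A'.

Definition seqR := nat -> R.
Definition sadd (x y : seqR) : seqR := fun i => x i + y i.
Definition sscal (a : R) (x : seqR) : seqR := fun i => a * x i.
Definition sopp (x : seqR) : seqR := fun i => - x i.

Definition in_X (p : ext) (x : seqR) : Prop :=
  match p with
  | Fin q => exists B, forall N, sumN N (fun i => rpow (Rabs (x i)) q) <= B
  | Inf => Un_cv x 0
  end.

Definition norm_le (p : ext) (x : seqR) (r : R) : Prop :=
  0 <= r /\
  match p with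
  | Fin q => forall N, sumN N (fun i => rpow (Rabs (x i)) q) <= rpow r q
  | Inf => forall i, Rabs (x i) <= r
  end.

Definition in_ball (p : ext) (x : seqR) : Prop := in_X p x /\ norm_le p x 1.

Definition e (k : nat) : seqR := fun i => if Nat.eq_dec i k then 1 else 0.

Definition bilinear (p : ext) (T : seqR -> seqR -> R) : Prop :=
  (forall x z y a, in_X p x -> in_X p z -> in_X Inf y ->
     T (sadd x (sscal a z)) y = T x y + a * T z y) /\
  (forall x y w a, in_X p x -> in_X Inf y -> in_X Inf w ->
     T x (sadd y (sscal a w)) = T x y + a * T x w).

Definition continuous_bil (p : ext) (T : seqR -> seqR -> R) : Prop :=
  forall x y, in_X p x -> in_X Inf y ->
  forall eps, 0 < eps -> exists delta, 0 < delta /\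
    forall x' y', in_X p x' -> in_X Inf y' ->
      norm_le p (sadd x' (sopp x)) delta -> norm_le Inf (sadd y' (sopp y)) delta ->
      Rabs (T x' y' - T x y) < eps.

Definition bil_norm (p : ext) (T : seqR -> seqR -> R) (m : R) : Prop :=
  is_lub (fun v => exists x y, in_ball p x /\ in_ball Inf y /\ v = Rabs (T x y)) m.

Definition ex1 (p : ext) : R := match p with Fin q => q / (2 * (q - 1)) | Inf => 1 / 2 end.
Definition ex2 (p : ext) : R := match p with Fin q => (q - 1) / q | Inf => 1 end.
Definition ex3 (p : ext) : R := match p with Fin q => q / (q - 1) | Inf => 1 end.
Definition ex4 (p : ext) : R := match p with Fin q => 2 * (q - 1) / q | Inf => 2 end.

(** The infinite sums of nonnegative terms are expressed through all finite
    truncations i < N, j < M (a nonnegative series converges with sum <= b iff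
    all partial sums are <= b; all maps involved are monotone). *)
Definition C_ineq (p : ext) (C : R) : Prop :=
  forall T m, bilinear p T -> continuous_bil p T -> bil_norm p T m ->
  forall N M,
    rpow (sumN N (fun i => rpow (sumN M (fun j => Rabs (T (e i) (e j)) ^ 2)) (ex1 p)))
         (ex2 p) <= C * m.

Definition D_ineq (p : ext) (D : R) : Prop :=
  forall T m, bilinear p T -> continuous_bil p T -> bil_norm p T m ->
  forall N M,
    rpow (sumN M (fun j => rpow (sumN N (fun i => rpow (Rabs (T (e i) (e j))) (ex3 p)))
                                (ex4 p)))
         (1 / 2) <= D * m.

(* Averaging over the 2^n sign vectors replaces the Rademacher integral, so Khintchine's
   inequality with exponent q = p/(p-1) compares (sum a_k^2)^(1/2) with the q-th moment of
   sum a_k eps_k over random signs; its optimal constant A exists since the ratio is at most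
   sqrt 3 by the second and fourth moments.

   Upper bounds: testing T against the norming vector of the row sums sum_j eps_j T(e_i, e_j)
   gives sum_i |sum_j eps_j T(e_i, e_j)|^q <= |T|^q for every sign vector eps. Averaging over
   eps and applying Khintchine to each row bounds the C-sum by A |T|, and Minkowski's inequality
   in l_(2/q), q <= 2, bounds the D-sum by the C-sum.

   Lower bounds: the form with entries 2^(-n/q) eps^(i)_j a_j, whose 2^n rows run through all
   sign vectors eps^(i), has norm at most (E |sum a_j eps_j|^q)^(1/q): after Hoelder in x the
   bound is a convex function of y, hence maximal at a vertex of the cube, where it does not
   depend on the vertex. Its C-sum and its D-sum both equal (sum a_j^2)^(1/2). *)

From Pilot Require Import Defs.
From Stdlib Require Import Reals Lra Lia FunctionalExtensionality.
From Coquelicot Require Import Coquelicot.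
Open Scope R_scope.

(** * Real powers *)

Lemma rpow_0l r : rpow 0 r = 0.
Proof. unfold rpow. destruct Req_EM_T; lra. Qed.

Lemma rpow_pos_eq x r : 0 < x -> rpow x r = Rpower x r.
Proof. intros H. unfold rpow. destruct Req_EM_T; [lra|reflexivity]. Qed.

Lemma rpow_ge0 x r : 0 <= rpow x r.
Proof. unfold rpow. destruct Req_EM_T; [lra|left; apply exp_pos]. Qed.

Lemma rpow_gt0 x r : 0 < x -> 0 < rpow x r.
Proof. intros H. rewrite rpow_pos_eq by exact H. apply exp_pos. Qed.

Lemma rpow_eq0 x r : 0 <= x -> rpow x r = 0 -> x = 0.
Proof. intros [H|H] E; [pose proof (rpow_gt0 x r H); lra|auto]. Qed.

Lemma rpow_1l r : rpow 1 r = 1.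
Proof. rewrite rpow_pos_eq by lra. unfold Rpower. rewrite ln_1, Rmult_0_r. apply exp_0. Qed.

Lemma rpow_0r x : 0 < x -> rpow x 0 = 1.
Proof. intros H. rewrite rpow_pos_eq by exact H. apply Rpower_O, H. Qed.

Lemma rpow_1r x : 0 <= x -> rpow x 1 = x.
Proof. intros [H|<-]; [rewrite rpow_pos_eq by exact H; apply Rpower_1, H|apply rpow_0l]. Qed.

Lemma rpow_rpow x a b : 0 <= x -> rpow (rpow x a) b = rpow x (a * b).
Proof.
  intros [H|<-]; [|rewrite !rpow_0l; reflexivity].
  rewrite !(rpow_pos_eq x) by exact H. rewrite rpow_pos_eq by apply exp_pos.
  apply Rpower_mult.
Qed.

Lemma rpow_mult_distr x y r : 0 <= x -> 0 <= y -> rpow (x * y) r = rpow x r * rpow y r.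
Proof.
  intros [Hx|<-] [Hy|<-]; rewrite ?Rmult_0_l, ?Rmult_0_r, ?rpow_0l; try ring.
  rewrite !rpow_pos_eq by nra. symmetry. apply Rpower_mult_distr; auto.
Qed.

Lemma rpow_plus x a b : 0 < x -> rpow x (a + b) = rpow x a * rpow x b.
Proof. intros H. rewrite !rpow_pos_eq by exact H. apply Rpower_plus. Qed.

Lemma rpow_Rinv x r : 0 < x -> rpow (/ x) r = / rpow x r.
Proof.
  intros H. rewrite !rpow_pos_eq by (try apply Rinv_0_lt_compat; exact H).
  unfold Rpower. rewrite ln_Rinv, <- exp_Ropp by exact H. f_equal. ring.
Qed.

Lemma rpow_div x y r : 0 <= x -> 0 < y -> rpow (x / y) r = rpow x r / rpow y r.
Proof.
  intros Hx Hy. unfold Rdiv.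
  rewrite rpow_mult_distr, rpow_Rinv; auto. left; apply Rinv_0_lt_compat, Hy.
Qed.

Lemma rpow_succ x r : 0 <= x -> x * rpow x (r - 1) = rpow x r.
Proof.
  intros [H|<-]; [|rewrite !rpow_0l; ring].
  replace r with (1 + (r - 1)) at 2 by ring. rewrite rpow_plus, rpow_1r; lra.
Qed.

Lemma rpow_2r x : 0 <= x -> rpow x 2 = x ^ 2.
Proof.
  intros [H|<-]; [|rewrite rpow_0l; ring].
  rewrite rpow_pos_eq by exact H. replace 2 with (INR 2) by (simpl; ring).
  apply Rpower_pow, H.
Qed.

Lemma rpow_half x : 0 <= x -> rpow x (1 / 2) = sqrt x.
Proof.
  intros [H|<-]; [|rewrite rpow_0l, sqrt_0; reflexivity].
  rewrite rpow_pos_eq by exact H. replace (1 / 2) with (/ 2) by field. apply Rpower_sqrt, H.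
Qed.

Lemma rpow_rpow_inv x r : 0 <= x -> 0 < r -> rpow (rpow x r) (1 / r) = x.
Proof.
  intros Hx Hr. rewrite rpow_rpow by exact Hx.
  replace (r * (1 / r)) with 1 by (field; lra). apply rpow_1r, Hx.
Qed.

Lemma rpow_inv_rpow x r : 0 <= x -> 0 < r -> rpow (rpow x (1 / r)) r = x.
Proof.
  intros Hx Hr. rewrite rpow_rpow by exact Hx.
  replace (1 / r * r) with 1 by (field; lra). apply rpow_1r, Hx.
Qed.

Lemma rpow_le_compat x y r : 0 <= x <= y -> 0 <= r -> rpow x r <= rpow y r.
Proof.
  intros [[Hx|<-] Hxy] Hr; [|rewrite rpow_0l; apply rpow_ge0].
  rewrite !rpow_pos_eq by lra. apply Rle_Rpower_l; lra.
Qed.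

Lemma rpow_lt_compat x y r : 0 <= x < y -> 0 < r -> rpow x r < rpow y r.
Proof.
  intros [[Hx|<-] Hxy] Hr; [|rewrite rpow_0l; apply rpow_gt0, Hxy].
  rewrite !rpow_pos_eq by lra. apply Rlt_Rpower_l; lra.
Qed.

Lemma rpow_le_reg x y r : 0 <= x -> 0 <= y -> 0 < r -> rpow x r <= rpow y r -> x <= y.
Proof.
  intros Hx Hy Hr H. destruct (Rle_lt_dec x y) as [Hxy|Hxy]; [exact Hxy|].
  pose proof (rpow_lt_compat y x r (conj Hy Hxy) Hr). lra.
Qed.

Lemma rpow_inv_le x y r : 0 <= x -> 0 <= y -> 0 < r -> rpow x (1 / r) <= y -> x <= rpow y r.
Proof.
  intros Hx Hy Hr H. rewrite <- (rpow_inv_rpow x r Hx Hr).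
  apply rpow_le_compat; [split; [apply rpow_ge0|exact H]|lra].
Qed.

Lemma rpow_ge_tangent1 r u : 1 <= r -> 0 <= u -> 1 + r * (u - 1) <= rpow u r.
Proof.
  intros Hr [Hu|<-]; [|rewrite rpow_0l; lra].
  rewrite <- rpow_succ by lra. rewrite rpow_pos_eq by exact Hu.
  assert (E1 : 1 + (r - 1) * ln u <= Rpower u (r - 1)) by apply exp_ineq1_le.
  (* [u ln u >= u - 1] is [ln (1/u) <= 1/u - 1] multiplied by u *)
  assert (E2 : u - 1 <= u * ln u).
  { pose proof (exp_ineq1_le (ln (/ u))) as E.
    rewrite exp_ln, ln_Rinv in E by (try apply Rinv_0_lt_compat; exact Hu).
    apply Rmult_le_compat_l with (r := u) in E; [|lra].
    rewrite Rmult_plus_distr_l, Rinv_r in E by lra. lra. }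
  apply Rmult_le_compat_l with (r := u) in E1; [|lra].
  assert ((r - 1) * (u - 1) <= (r - 1) * (u * ln u)) by (apply Rmult_le_compat_l; lra).
  lra.
Qed.

Lemma rpow_ge_tangent r c u : 1 <= r -> 0 < c -> 0 <= u ->
  rpow c r + r * rpow c (r - 1) * (u - c) <= rpow u r.
Proof.
  intros Hr Hc Hu.
  assert (Hrat : 0 <= u / c) by (unfold Rdiv; apply Rmult_le_pos; [lra|left; apply Rinv_0_lt_compat, Hc]).
  pose proof (rpow_ge_tangent1 r (u / c) Hr Hrat) as T.
  replace u with (c * (u / c)) at 2 by (field; lra).
  rewrite rpow_mult_distr, <- (rpow_succ c r) by lra.
  apply Rmult_le_compat_l with (r := c * rpow c (r - 1)) in T;
    [|apply Rmult_le_pos; [lra|apply rpow_ge0]].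
  replace (c * rpow c (r - 1) * (1 + r * (u / c - 1)))
    with (c * rpow c (r - 1) + r * rpow c (r - 1) * (u - c)) in T by (field; lra).
  lra.
Qed.

Lemma rpow_convex r a b l : 1 <= r -> 0 <= a -> 0 <= b -> 0 <= l <= 1 ->
  rpow (l * a + (1 - l) * b) r <= l * rpow a r + (1 - l) * rpow b r.
Proof.
  intros Hr Ha Hb Hl. set (z := l * a + (1 - l) * b).
  destruct (Rle_lt_or_eq_dec 0 z ltac:(unfold z; nra)) as [Hz|Hz].
  - pose proof (rpow_ge_tangent r z a Hr Hz Ha). pose proof (rpow_ge_tangent r z b Hr Hz Hb).
    set (K := r * rpow z (r - 1)) in *.
    assert (E : l * (a - z) + (1 - l) * (b - z) = 0) by (unfold z; ring).
    assert (l * (K * (a - z)) + (1 - l) * (K * (b - z)) = 0)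
      by (replace (l * (K * (a - z)) + (1 - l) * (K * (b - z))) with (K * (l * (a - z) + (1 - l) * (b - z))) by ring;
          rewrite E; ring).
    nra.
  - rewrite <- Hz, rpow_0l. pose proof (rpow_ge0 a r). pose proof (rpow_ge0 b r). nra.
Qed.

Lemma young p q x y : 1 < p -> q = p / (p - 1) -> 0 <= x -> 0 <= y ->
  x * y <= rpow x p / p + rpow y q / q.
Proof.
  intros Hp Hq Hx [Hy|<-].
  2:{ rewrite Rmult_0_r, rpow_0l. pose proof (rpow_ge0 x p).
      unfold Rdiv. rewrite Rmult_0_l. apply Rplus_le_le_0_compat; [|lra].
      apply Rmult_le_pos; [lra|left; apply Rinv_0_lt_compat; lra]. }
  (* the tangent to [t ^ p] at [c], with [c ^ (p - 1) = y], gives the inequality *)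
  set (c := rpow y (q - 1)).
  assert (Hc : 0 < c) by (apply rpow_gt0, Hy).
  assert (Ec1 : rpow c (p - 1) = y).
  { unfold c. rewrite rpow_rpow by lra.
    replace ((q - 1) * (p - 1)) with 1 by (rewrite Hq; field; lra). apply rpow_1r; lra. }
  assert (Ecp : rpow c p = rpow y q).
  { unfold c. rewrite rpow_rpow by lra. f_equal. rewrite Hq; field; lra. }
  assert (Eyc : y * c = rpow y q) by (apply rpow_succ; lra).
  pose proof (rpow_ge_tangent p c x ltac:(lra) Hc Hx) as T.
  rewrite Ec1, Ecp in T.
  replace (rpow y q / q) with (rpow y q * ((p - 1) / p)) by (rewrite Hq; field; lra).
  apply Rmult_le_reg_l with p; [lra|].
  replace (p * (rpow x p / p + rpow y q * ((p - 1) / p))) with (rpow x p + (p - 1) * rpow y q)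
    by (field; lra).
  rewrite <- Eyc in T |- *. nra.
Qed.

(** * Finite sums *)

Lemma sumN_ext n f g : (forall i, (i < n)%nat -> f i = g i) -> sumN n f = sumN n g.
Proof. induction n as [|n IH]; simpl; intros H; [reflexivity|]. rewrite IH, H; auto. Qed.

Lemma sumN_le n f g : (forall i, (i < n)%nat -> f i <= g i) -> sumN n f <= sumN n g.
Proof.
  induction n as [|n IH]; simpl; intros H; [lra|].
  pose proof (H n ltac:(lia)). pose proof (IH ltac:(auto)). lra.
Qed.

Lemma sumN_0 n : sumN n (fun _ => 0) = 0.
Proof. induction n as [|n IH]; simpl; [reflexivity|]. rewrite IH; ring. Qed.

Lemma sumN_ge0 n f : (forall i, (i < n)%nat -> 0 <= f i) -> 0 <= sumN n f.
Proof. intros H. rewrite <- (sumN_0 n). apply sumN_le, H. Qed.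

Lemma sumN_plus n f g : sumN n (fun i => f i + g i) = sumN n f + sumN n g.
Proof. induction n as [|n IH]; simpl; [ring|]. rewrite IH; ring. Qed.

Lemma sumN_minus n f g : sumN n (fun i => f i - g i) = sumN n f - sumN n g.
Proof. induction n as [|n IH]; simpl; [ring|]. rewrite IH; ring. Qed.

Lemma sumN_scal n c f : sumN n (fun i => c * f i) = c * sumN n f.
Proof. induction n as [|n IH]; simpl; [ring|]. rewrite IH; ring. Qed.

Lemma sumN_const n c : sumN n (fun _ => c) = INR n * c.
Proof. induction n as [|n IH]; simpl sumN; [simpl; ring|]. rewrite IH, S_INR. ring. Qed.

Lemma Rabs_sumN_le n f : Rabs (sumN n f) <= sumN n (fun i => Rabs (f i)).
Proof.
  induction n as [|n IH]; simpl; [rewrite Rabs_R0; lra|].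
  eapply Rle_trans; [apply Rabs_triang|]. lra.
Qed.

Lemma sumN_Sl n f : sumN (S n) f = f O + sumN n (fun k => f (S k)).
Proof. induction n as [|n IH]; simpl in *; [ring|]. rewrite IH. ring. Qed.

Lemma sumN_double n f :
  sumN (n + n) f = sumN n (fun i => f (2 * i)%nat) + sumN n (fun i => f (2 * i + 1)%nat).
Proof.
  induction n as [|n IH]; [simpl; ring|].
  replace (S n + S n)%nat with (S (S (n + n))) by lia. cbn [sumN]. rewrite IH.
  replace (S (n + n)) with (2 * n + 1)%nat by lia. replace (n + n)%nat with (2 * n)%nat by lia.
  ring.
Qed.

Lemma sumN_ge_term n f i : (forall k, (k < n)%nat -> 0 <= f k) -> (i < n)%nat -> f i <= sumN n f.
Proof.
  induction n as [|n IH]; intros H Hi; [lia|]. simpl.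
  destruct (Nat.eq_dec i n) as [->|Hin].
  - pose proof (sumN_ge0 n f ltac:(intros; apply H; lia)). lra.
  - pose proof (IH ltac:(intros; apply H; lia) ltac:(lia)). pose proof (H n ltac:(lia)). lra.
Qed.

Lemma sumN_eq0 n f : (forall k, (k < n)%nat -> 0 <= f k) -> sumN n f = 0 ->
  forall i, (i < n)%nat -> f i = 0.
Proof. intros H Hsum i Hi. pose proof (sumN_ge_term n f i H Hi). pose proof (H i Hi). lra. Qed.

Lemma sumN_le_support n N f : (forall i, 0 <= f i) -> (forall i, (N <= i)%nat -> f i = 0) ->
  sumN n f <= sumN N f.
Proof.
  intros H0 H1.
  assert (Mono : forall k, sumN n f <= sumN (n + k) f).
  { induction k as [|k IH]; [rewrite Nat.add_0_r; lra|].
    rewrite Nat.add_succ_r. simpl. pose proof (H0 (n + k)%nat). lra. }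
  assert (Tail : forall k, sumN (N + k) f = sumN N f).
  { induction k as [|k IH]; [rewrite Nat.add_0_r; reflexivity|].
    rewrite Nat.add_succ_r. simpl. rewrite IH, H1 by lia. ring. }
  destruct (Nat.le_ge_cases n N) as [HnN|HNn].
  - replace N with (n + (N - n))%nat by lia. apply Mono.
  - replace n with (N + (n - N))%nat by lia. rewrite Tail. lra.
Qed.

(** * Sign averages and the Rademacher functions *)

Definition scons (c : R) (eps : nat -> R) : nat -> R :=
  fun k => match k with O => c | S k => eps k end.

Fixpoint sign_avg (n : nat) (F : (nat -> R) -> R) : R :=
  match n with
  | O => F (fun _ => 0)
  | S n => (sign_avg n (fun eps => F (scons 1 eps)) + sign_avg n (fun eps => F (scons (-1) eps))) / 2
  end.

Definition dep_first (n : nat) (F : (nat -> R) -> R) : Prop :=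
  forall eps eps', (forall k, (k < n)%nat -> eps k = eps' k) -> F eps = F eps'.

Lemma dep_first_scons n F c : dep_first (S n) F -> dep_first n (fun eps => F (scons c eps)).
Proof. intros D e1 e2 He. apply D. intros [|k] Hk; simpl; auto. apply He; lia. Qed.

Lemma sign_avg_ext n F G : (forall eps, F eps = G eps) -> sign_avg n F = sign_avg n G.
Proof. intros H. f_equal. apply functional_extensionality, H. Qed.

Lemma sign_avg_plus n F G : sign_avg n (fun eps => F eps + G eps) = sign_avg n F + sign_avg n G.
Proof. revert F G; induction n as [|n IH]; intros F G; simpl; [reflexivity|]. rewrite !IH. field. Qed.

Lemma sign_avg_scal n c F : sign_avg n (fun eps => c * F eps) = c * sign_avg n F.
Proof. revert F; induction n as [|n IH]; intros F; simpl; [reflexivity|]. rewrite !IH. field. Qed.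

Lemma sign_avg_const n c : sign_avg n (fun _ => c) = c.
Proof. induction n as [|n IH]; simpl; [reflexivity|]. rewrite IH. field. Qed.

Lemma sign_avg_sumN n N F :
  sign_avg n (fun eps => sumN N (fun i => F i eps)) = sumN N (fun i => sign_avg n (F i)).
Proof.
  induction N as [|N IH]; simpl; [apply sign_avg_const|]. rewrite sign_avg_plus, IH. reflexivity.
Qed.

Lemma sign_avg_le_box n F G :
  (forall eps, (forall k, Rabs (eps k) <= 1) -> F eps <= G eps) -> sign_avg n F <= sign_avg n G.
Proof.
  revert F G; induction n as [|n IH]; intros F G H; simpl.
  - apply H. intros; rewrite Rabs_R0; lra.
  - assert (B : forall c eps, Rabs c <= 1 -> (forall k, Rabs (eps k) <= 1) ->
                 forall k, Rabs (scons c eps k) <= 1) by (intros c eps Hc He [|k]; simpl; auto).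
    assert (B1 : Rabs 1 <= 1) by (rewrite Rabs_R1; lra).
    assert (Bm1 : Rabs (-1) <= 1) by (rewrite Rabs_m1; lra).
    pose proof (IH (fun eps => F (scons 1 eps)) (fun eps => G (scons 1 eps))
                   ltac:(intros; apply H, B; auto)).
    pose proof (IH (fun eps => F (scons (-1) eps)) (fun eps => G (scons (-1) eps))
                   ltac:(intros; apply H, B; auto)).
    lra.
Qed.

Lemma sign_avg_le n F G : (forall eps, F eps <= G eps) -> sign_avg n F <= sign_avg n G.
Proof. intros H. apply sign_avg_le_box. intros; apply H. Qed.

Lemma sign_avg_ge0 n F : (forall eps, 0 <= F eps) -> 0 <= sign_avg n F.
Proof. intros H. rewrite <- (sign_avg_const n 0). apply sign_avg_le, H. Qed.

Lemma sign_avg_flip n F s : (forall k, s k = 1 \/ s k = -1) ->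
  sign_avg n (fun eps => F (fun k => s k * eps k)) = sign_avg n F.
Proof.
  revert F s; induction n as [|n IH]; intros F s Hs; simpl.
  - f_equal. apply functional_extensionality; intros; ring.
  - assert (E : forall c eps, (fun k => s k * scons c eps k) = scons (s O * c) (fun k => s (S k) * eps k))
      by (intros c eps; apply functional_extensionality; intros [|k]; reflexivity).
    rewrite (sign_avg_ext n (fun eps => F (fun k => s k * scons 1 eps k))
                         (fun eps => (fun e' => F (scons (s O * 1) e')) (fun k => s (S k) * eps k)))
      by (intros; rewrite E; reflexivity).
    rewrite (sign_avg_ext n (fun eps => F (fun k => s k * scons (-1) eps k))
                         (fun eps => (fun e' => F (scons (s O * -1) e')) (fun k => s (S k) * eps k)))
      by (intros; rewrite E; reflexivity).
    rewrite (IH (fun e' => F (scons (s O * 1) e')) (fun k => s (S k))) by auto.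
    rewrite (IH (fun e' => F (scons (s O * -1) e')) (fun k => s (S k))) by auto.
    destruct (Hs O) as [-> | ->]; rewrite ?Rmult_1_l, ?Rmult_1_r; [reflexivity|].
    replace (-1 * -1) with 1 by ring. rewrite Rplus_comm. reflexivity.
Qed.

Lemma rad_SS k t : rad (S (S k)) t = rad (S k) (2 * t).
Proof. unfold rad. f_equal. f_equal. simpl. ring. Qed.

Lemma rad_SS_shift k t : rad (S (S k)) t = rad (S k) (2 * t - 1).
Proof.
  unfold rad. f_equal.
  replace (2 ^ S (S k) * PI * t) with (2 ^ S k * PI * (2 * t - 1) + 2 * INR (2 ^ k) * PI).
  - apply sin_period.
  - rewrite pow_INR. replace (INR 2) with 2 by (simpl; ring). simpl. ring.
Qed.

Lemma rad1_left t : 0 < t < 1 / 2 -> rad 1 t = 1.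
Proof.
  intros Ht. unfold rad, Defs.sign.
  assert (0 < sin (2 ^ 1 * PI * t)) by (apply sin_gt_0; simpl; pose proof PI_RGT_0; nra).
  destruct Rlt_dec; [reflexivity|lra].
Qed.

Lemma rad1_right t : 1 / 2 < t < 1 -> rad 1 t = -1.
Proof.
  intros Ht. unfold rad, Defs.sign.
  assert (sin (2 ^ 1 * PI * t) < 0) by (apply sin_lt_0; simpl; pose proof PI_RGT_0; nra).
  destruct Rlt_dec; [lra|]. destruct Rlt_dec; [reflexivity|lra].
Qed.

Lemma is_RInt_dilate f c a b v : 2 * a + c = 0 -> 2 * b + c = 1 ->
  is_RInt f 0 1 v -> is_RInt (fun t => f (2 * t + c)) a b (v / 2).
Proof.
  intros Ha Hb I. rewrite <- Ha, <- Hb in I.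
  apply is_RInt_comp_lin, (is_RInt_scal _ _ _ (1 / 2)) in I.
  replace (v / 2) with (scal (1 / 2) v) by (unfold scal; simpl; unfold mult; simpl; field).
  eapply is_RInt_ext; [|exact I]. intros t _. unfold scal; simpl; unfold mult; simpl. field.
Qed.

(* The dyadic self-similarity of the Rademacher system turns its integral into a sign average. *)
Lemma is_RInt_rad n F : dep_first n F ->
  is_RInt (fun t => F (fun k => rad (S k) t)) 0 1 (sign_avg n F).
Proof.
  revert F; induction n as [|n IH]; intros F D; simpl.
  - pose proof (is_RInt_const 0 1 (F (fun _ => 0))) as C.
    unfold scal in C; simpl in C; unfold mult in C; simpl in C.
    rewrite Rminus_0_r, Rmult_1_l in C.
    eapply is_RInt_ext; [|exact C]. intros t _. apply D. lia.
  - pose proof (is_RInt_dilate _ 0 0 (1 / 2) _ ltac:(lra) ltac:(lra)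
                  (IH _ (dep_first_scons n F 1 D))) as J1.
    pose proof (is_RInt_dilate _ (-1) (1 / 2) 1 _ ltac:(lra) ltac:(lra)
                  (IH _ (dep_first_scons n F (-1) D))) as J2.
    assert (K1 : is_RInt (fun t => F (fun k => rad (S k) t)) 0 (1 / 2)
                   (sign_avg n (fun eps => F (scons 1 eps)) / 2)).
    { eapply is_RInt_ext; [|exact J1].
      intros t Ht. rewrite Rmin_left, Rmax_right in Ht by lra. cbv beta. f_equal.
      apply functional_extensionality. intros [|k]; simpl.
      - symmetry; apply rad1_left; lra.
      - rewrite rad_SS. f_equal; ring. }
    assert (K2 : is_RInt (fun t => F (fun k => rad (S k) t)) (1 / 2) 1
                   (sign_avg n (fun eps => F (scons (-1) eps)) / 2)).
    { eapply is_RInt_ext; [|exact J2].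
      intros t Ht. rewrite Rmin_left, Rmax_right in Ht by lra. cbv beta. f_equal.
      apply functional_extensionality. intros [|k]; simpl.
      - symmetry; apply rad1_right; lra.
      - rewrite rad_SS_shift. f_equal; ring. }
    pose proof (is_RInt_Chasles _ _ _ _ _ _ K1 K2) as K.
    unfold plus in K; simpl in K.
    replace ((_ + _) / 2) with (sign_avg n (fun eps => F (scons 1 eps)) / 2
      + sign_avg n (fun eps => F (scons (-1) eps)) / 2) by field.
    exact K.
Qed.

Lemma RiemannInt_rad n F (D : dep_first n F)
  (pr : Riemann_integrable (fun t => F (fun k => rad (S k) t)) 0 1) :
  RiemannInt pr = sign_avg n F.
Proof. rewrite <- RInt_Reals. apply is_RInt_unique, is_RInt_rad, D. Qed.

Lemma Riemann_integrable_rad n F : dep_first n F ->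
  Riemann_integrable (fun t => F (fun k => rad (S k) t)) 0 1.
Proof. intros D. apply ex_RInt_Reals_0. eexists. apply is_RInt_rad, D. Qed.

(** * Khintchine's inequality over signs *)

Definition rad_sum (n : nat) (a eps : nat -> R) : R := sumN n (fun k => a (S k) * eps k).
Definition sumsq (n : nat) (a : nat -> R) : R := sumN n (fun k => a (S k) ^ 2).
Definition shift (a : nat -> R) : nat -> R := fun k => a (S k).

Lemma rad_sum_scons n a c eps : rad_sum (S n) a (scons c eps) = a 1%nat * c + rad_sum n (shift a) eps.
Proof. unfold rad_sum. rewrite sumN_Sl. reflexivity. Qed.

Lemma sumsq_S n a : sumsq (S n) a = a 1%nat ^ 2 + sumsq n (shift a).
Proof. unfold sumsq. rewrite sumN_Sl. reflexivity. Qed.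

Lemma sumsq_ge0 n a : 0 <= sumsq n a.
Proof. apply sumN_ge0. intros; apply pow2_ge_0. Qed.

Lemma dep_first_rad_sum n a G : dep_first n (fun eps => G (rad_sum n a eps)).
Proof. intros e1 e2 H. unfold rad_sum. f_equal. apply sumN_ext. intros i Hi. rewrite H; auto. Qed.

Lemma sign_avg_rad_sum_sq n a : sign_avg n (fun eps => rad_sum n a eps ^ 2) = sumsq n a.
Proof.
  revert a; induction n as [|n IH]; intros a; [unfold rad_sum, sumsq; simpl; ring|cbn [sign_avg]].
  rewrite <- sign_avg_plus.
  rewrite (sign_avg_ext n _ (fun eps => 2 * a 1%nat ^ 2 + 2 * rad_sum n (shift a) eps ^ 2))
    by (intros; rewrite !rad_sum_scons; ring).
  rewrite sign_avg_plus, sign_avg_const, sign_avg_scal, IH, sumsq_S. field.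
Qed.

Lemma sign_avg_rad_sum_pow4_le n a : sign_avg n (fun eps => rad_sum n a eps ^ 4) <= 3 * sumsq n a ^ 2.
Proof.
  revert a; induction n as [|n IH]; intros a; [unfold rad_sum, sumsq; simpl; lra|cbn [sign_avg]].
  rewrite <- sign_avg_plus.
  rewrite (sign_avg_ext n _ (fun eps => 2 * a 1%nat ^ 4
             + (12 * a 1%nat ^ 2 * rad_sum n (shift a) eps ^ 2 + 2 * rad_sum n (shift a) eps ^ 4)))
    by (intros; rewrite !rad_sum_scons; ring).
  rewrite !sign_avg_plus, sign_avg_const, !sign_avg_scal, sign_avg_rad_sum_sq, sumsq_S.
  pose proof (IH (shift a)). pose proof (sumsq_ge0 n (shift a)). pose proof (pow2_ge_0 (a 1%nat)).
  nra.
Qed.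

Lemma Rabs_ge_quartic x c : 0 < c -> (3 * c ^ 2 * x ^ 2 - x ^ 4) / (2 * c ^ 3) <= Rabs x.
Proof.
  intros Hc. apply Rle_div_l; [apply Rmult_lt_0_compat; [lra|apply pow_lt, Hc]|].
  replace (x ^ 4) with ((x ^ 2) ^ 2) by ring. rewrite <- (pow2_abs x).
  set (u := Rabs x). assert (Hu : 0 <= u) by apply Rabs_pos.
  assert (0 <= u * (u - c) ^ 2 * (u + 2 * c))
    by (apply Rmult_le_pos; [apply Rmult_le_pos; [lra|apply pow2_ge_0]|lra]).
  replace (u * (u - c) ^ 2 * (u + 2 * c)) with (u * (2 * c ^ 3) - (3 * c ^ 2 * u ^ 2 - (u ^ 2) ^ 2))
    in H by ring.
  lra.
Qed.

(* Average the pointwise bound [Rabs_ge_quartic], with [c ^ 2 = 3 s], using the second and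
   fourth moments. *)
Lemma sign_avg_abs_rad_sum_ge n a :
  sqrt (sumsq n a) / sqrt 3 <= sign_avg n (fun eps => Rabs (rad_sum n a eps)).
Proof.
  set (s := sumsq n a). destruct (Rle_lt_or_eq_dec 0 s (sumsq_ge0 n a)) as [Hs|Hs].
  2:{ rewrite <- Hs, sqrt_0. unfold Rdiv. rewrite Rmult_0_l.
      apply sign_avg_ge0. intros; apply Rabs_pos. }
  set (c := sqrt (3 * s)).
  assert (Hc : 0 < c) by (apply sqrt_lt_R0; lra).
  assert (Hc2 : c ^ 2 = 3 * s) by (unfold c; rewrite <- Rsqr_pow2, Rsqr_sqrt; lra).
  assert (Hs3 : 0 < sqrt 3) by (apply sqrt_lt_R0; lra).
  assert (Hss : 0 < sqrt s) by (apply sqrt_lt_R0; lra).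
  replace (sqrt s / sqrt 3) with (s / c).
  2:{ unfold c. rewrite sqrt_mult by lra. rewrite <- (sqrt_sqrt s) at 1 by lra. field; lra. }
  eapply Rle_trans; [|apply sign_avg_le; intros eps; apply (Rabs_ge_quartic _ c Hc)].
  rewrite (sign_avg_ext n _ (fun eps => 3 * c ^ 2 / (2 * c ^ 3) * rad_sum n a eps ^ 2
                                        + - / (2 * c ^ 3) * rad_sum n a eps ^ 4))
    by (intros; field; lra).
  rewrite sign_avg_plus, !sign_avg_scal, sign_avg_rad_sum_sq. fold s.
  assert (Hinv : 0 < / (2 * c ^ 3)) by (apply Rinv_0_lt_compat, Rmult_lt_0_compat; [lra|apply pow_lt, Hc]).
  pose proof (sign_avg_rad_sum_pow4_le n a) as M4. fold s in M4.
  apply Rmult_le_compat_l with (r := / (2 * c ^ 3)) in M4; [|lra].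
  replace (s / c) with (3 * c ^ 2 / (2 * c ^ 3) * s + - / (2 * c ^ 3) * (3 * s ^ 2)).
  - lra.
  - replace (c ^ 3) with (c ^ 2 * c) by ring. rewrite Hc2. field. lra.
Qed.

Lemma rpow_sign_avg_le n F r : 1 <= r -> (forall eps, 0 <= F eps) ->
  rpow (sign_avg n F) r <= sign_avg n (fun eps => rpow (F eps) r).
Proof.
  intros Hr HF. set (c := sign_avg n F).
  destruct (Rle_lt_or_eq_dec 0 c (sign_avg_ge0 n F HF)) as [Hc|Hc].
  - eapply Rle_trans; [|apply sign_avg_le; intros eps; apply (rpow_ge_tangent r c (F eps) Hr Hc (HF eps))].
    rewrite (sign_avg_ext n _ (fun eps => r * rpow c (r - 1) * F eps + (rpow c r - r * rpow c (r - 1) * c)))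
      by (intros; ring).
    rewrite sign_avg_plus, sign_avg_scal, sign_avg_const. fold c. lra.
  - rewrite <- Hc, rpow_0l. apply sign_avg_ge0. intros; apply rpow_ge0.
Qed.

Definition rad_norm (q : R) (n : nat) (a : nat -> R) : R :=
  rpow (sign_avg n (fun eps => rpow (Rabs (rad_sum n a eps)) q)) (1 / q).

Lemma rad_norm_ge0 q n a : 0 <= rad_norm q n a.
Proof. apply rpow_ge0. Qed.

Lemma khintchine_sqrt3 q n a : 1 <= q -> sqrt (sumsq n a) <= sqrt 3 * rad_norm q n a.
Proof.
  intros Hq.
  assert (J : sign_avg n (fun eps => Rabs (rad_sum n a eps)) <= rad_norm q n a).
  { rewrite <- (rpow_rpow_inv (sign_avg n _) q) by (try apply sign_avg_ge0; intros; try apply Rabs_pos; lra).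
    apply rpow_le_compat; [|apply Rlt_le, Rdiv_lt_0_compat; lra].
    split; [apply rpow_ge0|]. apply rpow_sign_avg_le; [exact Hq|]. intros; apply Rabs_pos. }
  pose proof (sign_avg_abs_rad_sum_ge n a) as L.
  apply Rle_div_l in L; [|apply Rlt_gt, sqrt_lt_R0; lra].
  pose proof (sqrt_pos 3). nra.
Qed.

Definition khintchine_sign (q A : R) : Prop :=
  forall n a, sqrt (sumsq n a) <= A * rad_norm q n a.

Lemma khintchine_ineq_iff_sign q A : khintchine_ineq q A <-> khintchine_sign q A.
Proof.
  pose proof (fun n a => dep_first_rad_sum n a (fun s => rpow (Rabs s) q)) as D.
  assert (Sq : forall n a, sumN n (fun k => Rabs (a (S k)) ^ 2) = sumsq n a)
    by (intros; apply sumN_ext; intros; apply pow2_abs).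
  split.
  - intros K n a. specialize (K n a (Riemann_integrable_rad n _ (D n a))).
    rewrite Sq, (RiemannInt_rad n _ (D n a)) in K. exact K.
  - intros K n a pr. rewrite Sq.
    replace (RiemannInt pr) with (sign_avg n (fun eps => rpow (Rabs (rad_sum n a eps)) q))
      by (symmetry; apply (RiemannInt_rad n _ (D n a))).
    apply K.
Qed.

Lemma rad_norm_unit q : 0 < q -> rad_norm q 1 (fun _ => 1) = 1.
Proof.
  intros Hq. unfold rad_norm, rad_sum. simpl.
  rewrite !Rplus_0_l, !Rmult_1_l, Rabs_R1, Rabs_m1, rpow_1l.
  replace ((1 + 1) / 2) with 1 by field. apply rpow_1l.
Qed.

Lemma khintchine_sign_ge1 q A : 0 < q -> khintchine_sign q A -> 1 <= A.
Proof.
  intros Hq K. specialize (K 1%nat (fun _ => 1)).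
  rewrite rad_norm_unit in K by exact Hq. unfold sumsq in K. simpl in K.
  rewrite Rplus_0_l, !Rmult_1_l, sqrt_1 in K. lra.
Qed.

(* The optimal constant is the supremum of the ratios, which are bounded by [sqrt 3]. *)
Lemma khintchine_sign_optimal q : 1 <= q -> exists A, is_optimal (khintchine_sign q) A.
Proof.
  intros Hq.
  set (V := fun v => exists n a, 0 < rad_norm q n a /\ v = sqrt (sumsq n a) / rad_norm q n a).
  assert (B : bound V).
  { exists (sqrt 3). intros v (n & a & Hn & ->). apply Rle_div_l; [exact Hn|].
    apply khintchine_sqrt3, Hq. }
  assert (Ne : exists v, V v).
  { exists (sqrt (sumsq 1 (fun _ => 1)) / rad_norm q 1 (fun _ => 1)). exists 1%nat, (fun _ => 1).
    rewrite rad_norm_unit by lra. split; [lra|reflexivity]. }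
  destruct (completeness V B Ne) as [A [Hub Hleast]].
  exists A. split.
  - intros n a. destruct (rad_norm_ge0 q n a) as [Hn|Hn].
    + apply Rle_div_l; [exact Hn|]. apply Hub. exists n, a. auto.
    + pose proof (khintchine_sqrt3 q n a Hq). rewrite <- Hn in *. lra.
  - intros A' K. apply Hleast. intros v (n & a & Hn & ->). apply Rle_div_l; [exact Hn|]. apply K.
Qed.

(** * Sequence spaces, Hoelder's inequality and norming vectors *)

Definition p_gt1 (p : ext) : Prop :=
  match p with Fin q => 1 < q | Inf => True end.

Lemma p_ge2_gt1 p : p_ge2 p -> p_gt1 p.
Proof. destruct p; simpl; lra. Qed.

Lemma ex3_ge1 p : p_gt1 p -> 1 <= ex3 p.
Proof.
  destruct p as [p|]; simpl; intros Hp; [|lra].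
  apply Rle_div_r; lra.
Qed.

Lemma ex3_le2 p : p_ge2 p -> ex3 p <= 2.
Proof.
  destruct p as [p|]; simpl; intros Hp; [|lra].
  apply Rle_div_l; lra.
Qed.

Lemma ex1_ex3 p : p_gt1 p -> ex1 p = ex3 p / 2.
Proof. destruct p; simpl; intros; field; lra. Qed.

Lemma ex2_ex3 p : p_gt1 p -> ex2 p = 1 / ex3 p.
Proof. destruct p; simpl; intros; field; lra. Qed.

Lemma ex4_ex3 p : p_gt1 p -> ex4 p = 2 / ex3 p.
Proof. destruct p; simpl; intros; field; lra. Qed.

Definition lnorm (q : R) (N : nat) (b : nat -> R) : R :=
  rpow (sumN N (fun i => rpow (Rabs (b i)) q)) (1 / q).

Lemma lnorm_ge0 q N b : 0 <= lnorm q N b.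
Proof. apply rpow_ge0. Qed.

Lemma sumN_rpow_abs_ge0 q N b : 0 <= sumN N (fun i => rpow (Rabs (b i)) q).
Proof. apply sumN_ge0. intros; apply rpow_ge0. Qed.

Lemma lnorm_pow q N b : 0 < q -> rpow (lnorm q N b) q = sumN N (fun i => rpow (Rabs (b i)) q).
Proof. intros Hq. apply rpow_inv_rpow; [apply sumN_rpow_abs_ge0|exact Hq]. Qed.

Lemma lnorm_eq0 q N b : 0 < q -> lnorm q N b = 0 -> forall i, (i < N)%nat -> b i = 0.
Proof.
  intros Hq H i Hi. pose proof (lnorm_pow q N b Hq) as E. rewrite H, rpow_0l in E.
  pose proof (sumN_eq0 N _ ltac:(intros; apply rpow_ge0) (eq_sym E) i Hi) as Ei.
  apply rpow_eq0 in Ei; [|apply Rabs_pos]. destruct (Req_dec (b i) 0) as [|Hb]; [assumption|].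
  apply Rabs_no_R0 in Hb. lra.
Qed.

Lemma lnorm_1 N b : lnorm 1 N b = sumN N (fun i => Rabs (b i)).
Proof.
  unfold lnorm. replace (1 / 1) with 1 by field. rewrite rpow_1r by apply sumN_rpow_abs_ge0.
  apply sumN_ext. intros; apply rpow_1r, Rabs_pos.
Qed.

Definition trunc (N : nat) (x : seqR) : seqR :=
  fun i => if Compare_dec.lt_dec i N then x i else 0.

Lemma trunc_lt N x i : (i < N)%nat -> trunc N x i = x i.
Proof. intros. unfold trunc. destruct Compare_dec.lt_dec; [reflexivity|lia]. Qed.

Lemma trunc_ge N x i : (N <= i)%nat -> trunc N x i = 0.
Proof. intros. unfold trunc. destruct Compare_dec.lt_dec; [lia|reflexivity]. Qed.

Lemma trunc_0 x : trunc 0 x = (fun _ => 0).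
Proof. apply functional_extensionality. intros i. apply trunc_ge. lia. Qed.

Lemma trunc_S N x : trunc (S N) x = sadd (trunc N x) (sscal (x N) (e N)).
Proof.
  apply functional_extensionality. intros i. unfold sadd, sscal, e, trunc.
  destruct (Compare_dec.lt_dec i (S N)), (Compare_dec.lt_dec i N), (Nat.eq_dec i N);
    subst; try lia; ring.
Qed.

Lemma in_X_trunc p N x : in_X p (trunc N x).
Proof.
  destruct p as [q|]; simpl.
  - exists (sumN N (fun i => rpow (Rabs (trunc N x i)) q)). intros M.
    apply sumN_le_support; [intros; apply rpow_ge0|].
    intros i Hi. rewrite trunc_ge, Rabs_R0 by exact Hi. apply rpow_0l.
  - intros eps He. exists N. intros n Hn. unfold R_dist.
    rewrite trunc_ge by lia. rewrite Rminus_0_r, Rabs_R0. exact He.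
Qed.

Lemma e_trunc k : e k = trunc (S k) (e k).
Proof.
  apply functional_extensionality. intros i. unfold trunc, e.
  destruct Compare_dec.lt_dec, Nat.eq_dec; auto; lia.
Qed.

Lemma in_X_e p k : in_X p (e k).
Proof. rewrite e_trunc. apply in_X_trunc. Qed.

Lemma in_X_zero p : in_X p (fun _ => 0).
Proof. rewrite <- (trunc_0 (fun _ => 0)). apply in_X_trunc. Qed.

Lemma in_ball_zero p : in_ball p (fun _ => 0).
Proof.
  split; [apply in_X_zero|]. split; [lra|]. destruct p; simpl; intros.
  - rewrite rpow_1l, (sumN_ext N _ (fun _ => 0)), sumN_0; [lra|].
    intros. rewrite Rabs_R0. apply rpow_0l.
  - rewrite Rabs_R0; lra.
Qed.

Lemma in_ball_Inf_trunc M y : (forall k, Rabs (y k) <= 1) -> in_ball Inf (trunc M y).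
Proof.
  intros Hy. split; [apply in_X_trunc|]. split; [lra|]. simpl. intros i. unfold trunc.
  destruct Compare_dec.lt_dec; [apply Hy|rewrite Rabs_R0; lra].
Qed.

Lemma norm_le_coord p d r : p_gt1 p -> norm_le p d r -> forall i, Rabs (d i) <= r.
Proof.
  intros Hp [Hr H] i. destruct p as [p|]; simpl in *; [|apply H].
  specialize (H (S i)). simpl in H.
  pose proof (sumN_rpow_abs_ge0 p i d).
  apply (rpow_le_reg _ _ p); [apply Rabs_pos|exact Hr|lra|lra].
Qed.

Lemma holder_fin p N x b : 1 < p -> sumN N (fun i => rpow (Rabs (x i)) p) <= 1 ->
  sumN N (fun i => Rabs (x i * b i)) <= lnorm (p / (p - 1)) N b.
Proof.
  intros Hp Hx. set (q := p / (p - 1)).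
  assert (Hq : 1 < q) by (apply Rlt_div_r; unfold Rdiv; lra).
  set (B := lnorm q N b).
  destruct (lnorm_ge0 q N b) as [HB|HB].
  2:{ rewrite (sumN_ext N _ (fun _ => 0)), sumN_0; [apply lnorm_ge0|].
      intros i Hi. rewrite (lnorm_eq0 q N b ltac:(lra) (eq_sym HB) i Hi), Rmult_0_r. apply Rabs_R0. }
  fold B in HB. set (S := sumN N (fun i => rpow (Rabs (b i)) q)).
  assert (HBq : rpow B q = S) by (apply lnorm_pow; lra).
  (* Young's inequality for [|x_i|] and [|b_i| / B], rescaled by [B] *)
  assert (Y : forall i, Rabs (x i * b i) <=
                B * (/ p * rpow (Rabs (x i)) p + / (q * S) * rpow (Rabs (b i)) q)).
  { intros i. rewrite Rabs_mult.
    pose proof (young p q (Rabs (x i)) (Rabs (b i) / B) Hp eq_refl (Rabs_pos _)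
                  (Rdiv_le_0_compat _ _ (Rabs_pos _) HB)) as Yi.
    rewrite rpow_div, HBq in Yi by (apply Rabs_pos || exact HB).
    apply Rmult_le_compat_l with (r := B) in Yi; [|lra].
    replace (B * (Rabs (x i) * (Rabs (b i) / B))) with (Rabs (x i) * Rabs (b i)) in Yi by (field; lra).
    eapply Rle_trans; [exact Yi|]. right. f_equal. field.
    split; [|lra]. rewrite <- HBq. apply Rgt_not_eq, rpow_gt0, HB. }
  eapply Rle_trans; [apply sumN_le; intros i _; apply Y|].
  rewrite sumN_scal, sumN_plus, !sumN_scal. fold S.
  assert (HS : 0 < S) by (rewrite <- HBq; apply rpow_gt0, HB).
  replace (/ (q * S) * S) with (/ q) by (field; lra).
  assert (/ p * sumN N (fun i => rpow (Rabs (x i)) p) <= / p)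
    by (rewrite <- (Rmult_1_r (/ p)) at 2; apply Rmult_le_compat_l; [left; apply Rinv_0_lt_compat|]; lra).
  assert (/ p + / q = 1) by (unfold q; field; lra).
  nra.
Qed.

Lemma holder p N x b : p_gt1 p -> in_ball p x ->
  Rabs (sumN N (fun i => x i * b i)) <= lnorm (ex3 p) N b.
Proof.
  intros Hp [_ [_ Hx]]. eapply Rle_trans; [apply Rabs_sumN_le|].
  destruct p as [p|]; simpl in Hp, Hx |- *.
  - apply holder_fin; [exact Hp|]. rewrite <- (rpow_1l p). apply Hx.
  - rewrite lnorm_1. apply sumN_le. intros i _. rewrite Rabs_mult.
    pose proof (Hx i). pose proof (Rabs_pos (b i)). nra.
Qed.

Lemma sign_mul_self x : Defs.sign x * x = Rabs x.
Proof.
  unfold Defs.sign. destruct Rlt_dec; [rewrite Rabs_pos_eq; lra|].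
  destruct Rlt_dec; [rewrite Rabs_left; lra|]. replace x with 0 by lra. rewrite Rabs_R0. ring.
Qed.

Lemma Rabs_sign_rpow x r : Rabs (Defs.sign x * rpow (Rabs x) r) = rpow (Rabs x) r.
Proof.
  rewrite Rabs_mult, (Rabs_pos_eq (rpow _ _)) by apply rpow_ge0.
  unfold Defs.sign. destruct Rlt_dec; [rewrite Rabs_R1; ring|].
  destruct Rlt_dec; [rewrite Rabs_m1; ring|].
  replace x with 0 by lra. rewrite Rabs_R0, rpow_0l. ring.
Qed.

Lemma rpow_0r_le1 x : rpow x 0 <= 1.
Proof.
  unfold rpow. destruct Req_EM_T; [lra|]. unfold Rpower. rewrite Rmult_0_l, exp_0. lra.
Qed.

Definition norming (q : R) (N : nat) (b : nat -> R) : seqR :=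
  trunc N (fun i => Defs.sign (b i) * rpow (Rabs (b i)) (q - 1) / rpow (lnorm q N b) (q - 1)).

(* The vector vanishes when [lnorm q N b = 0], as Rocq's [/ 0] is [0]. *)
Lemma norming_lnorm0 q N b : lnorm q N b = 0 -> norming q N b = (fun _ => 0).
Proof.
  intros H. apply functional_extensionality. intros i. unfold norming, trunc.
  destruct Compare_dec.lt_dec; [|reflexivity].
  rewrite H, rpow_0l. unfold Rdiv. rewrite Rinv_0. ring.
Qed.

Lemma Rabs_norming q N b i : (i < N)%nat ->
  Rabs (norming q N b i) = rpow (Rabs (b i)) (q - 1) / rpow (lnorm q N b) (q - 1).
Proof.
  intros Hi. unfold norming. rewrite trunc_lt by exact Hi. unfold Rdiv.
  rewrite Rabs_mult, Rabs_sign_rpow, Rabs_inv, (Rabs_pos_eq (rpow _ _)) by apply rpow_ge0.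
  reflexivity.
Qed.

Lemma norming_pairing q N b : 0 < q -> sumN N (fun i => norming q N b i * b i) = lnorm q N b.
Proof.
  intros Hq. set (B := lnorm q N b).
  rewrite (sumN_ext N _ (fun i => / rpow B (q - 1) * rpow (Rabs (b i)) q)).
  - rewrite sumN_scal, <- lnorm_pow by exact Hq. fold B.
    destruct (lnorm_ge0 q N b) as [HB|HB]; fold B in HB.
    + rewrite <- (rpow_succ B q) by lra. field. apply Rgt_not_eq, rpow_gt0, HB.
    + rewrite <- HB, !rpow_0l. ring.
  - intros i Hi. unfold norming. rewrite trunc_lt by exact Hi. fold B.
    rewrite <- (rpow_succ (Rabs (b i)) q) by apply Rabs_pos. rewrite <- (sign_mul_self (b i)).
    unfold Rdiv. ring.
Qed.

Lemma norming_in_ball p N b : p_gt1 p -> in_ball p (norming (ex3 p) N b).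
Proof.
  intros Hp. set (q := ex3 p). pose proof (ex3_ge1 p Hp) as Hq. fold q in Hq.
  destruct (lnorm_ge0 q N b) as [HB|HB].
  2:{ rewrite norming_lnorm0 by auto. apply in_ball_zero. }
  split; [apply in_X_trunc|]. split; [lra|].
  destruct p as [p|]; simpl.
  - intros M. rewrite rpow_1l.
    assert (Hqp : (q - 1) * p = q) by (unfold q; simpl in Hp |- *; field; lra).
    eapply Rle_trans; [apply (sumN_le_support _ N); [intros; apply rpow_ge0|]|].
    { intros i Hi. unfold norming. rewrite trunc_ge, Rabs_R0 by exact Hi. apply rpow_0l. }
    right. rewrite (sumN_ext N _ (fun i => / rpow (lnorm q N b) q * rpow (Rabs (b i)) q)).
    + rewrite sumN_scal, <- lnorm_pow by lra. field. apply Rgt_not_eq, rpow_gt0, HB.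
    + intros i Hi. rewrite Rabs_norming by exact Hi.
      rewrite rpow_div by (apply rpow_ge0 || apply rpow_gt0, HB).
      rewrite !rpow_rpow, Hqp by (apply Rabs_pos || apply lnorm_ge0). unfold Rdiv. ring.
  - intros i. destruct (Compare_dec.lt_dec i N) as [Hi|Hi].
    + rewrite Rabs_norming by exact Hi. replace (q - 1) with 0 by (unfold q; simpl; ring).
      rewrite (rpow_0r (lnorm q N b)) by exact HB. unfold Rdiv. rewrite Rinv_1, Rmult_1_r.
      apply rpow_0r_le1.
    + unfold norming. rewrite trunc_ge, Rabs_R0 by lia. lra.
Qed.

(** * Upper bounds *)

Section BilinearExpansion.
Variable p : ext.
Variable T : seqR -> seqR -> R.
Hypothesis HT : bilinear p T.

Let sadd_zero : sadd (fun _ : nat => 0) (sscal 1 (fun _ => 0)) = (fun _ => 0).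
Proof. apply functional_extensionality. intros; unfold sadd, sscal; ring. Qed.

Lemma bilinear_zero_l y : in_X Inf y -> T (fun _ => 0) y = 0.
Proof.
  intros Hy. pose proof (proj1 HT _ _ y 1 (in_X_zero p) (in_X_zero p) Hy) as E.
  rewrite sadd_zero in E. lra.
Qed.

Lemma bilinear_zero_r x : in_X p x -> T x (fun _ => 0) = 0.
Proof.
  intros Hx. pose proof (proj2 HT x _ _ 1 Hx (in_X_zero Inf) (in_X_zero Inf)) as E.
  rewrite sadd_zero in E. lra.
Qed.

Lemma bilinear_trunc_l N x y : in_X Inf y -> T (trunc N x) y = sumN N (fun i => x i * T (e i) y).
Proof.
  intros Hy. induction N as [|N IH]; simpl.
  - rewrite trunc_0. apply bilinear_zero_l, Hy.
  - rewrite trunc_S, (proj1 HT), IH by auto using in_X_trunc, in_X_e. reflexivity.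
Qed.

Lemma bilinear_trunc_r M x y : in_X p x -> T x (trunc M y) = sumN M (fun j => y j * T x (e j)).
Proof.
  intros Hx. induction M as [|M IH]; simpl.
  - rewrite trunc_0. apply bilinear_zero_r, Hx.
  - rewrite trunc_S, (proj2 HT), IH by auto using in_X_trunc, in_X_e. reflexivity.
Qed.

Lemma bilinear_trunc N M x y :
  T (trunc N x) (trunc M y) = sumN N (fun i => x i * sumN M (fun j => y j * T (e i) (e j))).
Proof.
  rewrite bilinear_trunc_l by apply in_X_trunc. apply sumN_ext. intros i _.
  rewrite bilinear_trunc_r by apply in_X_e. reflexivity.
Qed.

End BilinearExpansion.

Lemma bil_norm_bound p T m x y : bil_norm p T m -> in_ball p x -> in_ball Inf y -> Rabs (T x y) <= m.
Proof. intros [Hub _] Hx Hy. apply Hub. exists x, y. auto. Qed.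

Lemma bil_norm_ge0 p T m : bil_norm p T m -> 0 <= m.
Proof.
  intros Hm. eapply Rle_trans; [apply Rabs_pos|].
  apply (bil_norm_bound p T m (fun _ => 0) (fun _ => 0) Hm); apply in_ball_zero.
Qed.

Definition row_coef (T : seqR -> seqR -> R) (i : nat) : nat -> R :=
  fun k => match k with O => 0 | S j => T (e i) (e j) end.

Lemma rad_sum_row_coef T i M eps :
  rad_sum M (row_coef T i) eps = sumN M (fun j => eps j * T (e i) (e j)).
Proof. apply sumN_ext. intros; simpl; ring. Qed.

Lemma sumsq_row_coef T i M : sumsq M (row_coef T i) = sumN M (fun j => Rabs (T (e i) (e j)) ^ 2).
Proof. apply sumN_ext. intros; simpl. symmetry. apply pow2_abs. Qed.

(* Pair [T] with the norming vector of the row sums and with the signs [eps]. *)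
Lemma row_sums_le_norm p T m N M eps : p_gt1 p -> bilinear p T -> bil_norm p T m ->
  (forall k, Rabs (eps k) <= 1) ->
  sumN N (fun i => rpow (Rabs (rad_sum M (row_coef T i) eps)) (ex3 p)) <= rpow m (ex3 p).
Proof.
  intros Hp HT Hm Heps. pose proof (ex3_ge1 p Hp) as Hq.
  set (b := fun i => rad_sum M (row_coef T i) eps).
  pose proof (bil_norm_bound p T m _ _ Hm (norming_in_ball p N b Hp) (in_ball_Inf_trunc M eps Heps)) as H.
  unfold norming in H. rewrite (bilinear_trunc p T HT) in H. fold (norming (ex3 p) N b) in H.
  rewrite (sumN_ext N _ (fun i => norming (ex3 p) N b i * b i)) in H.
  2:{ intros i Hi. unfold norming. rewrite trunc_lt by exact Hi. unfold b.
      rewrite rad_sum_row_coef. reflexivity. }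
  rewrite norming_pairing, Rabs_pos_eq in H by (apply lnorm_ge0 || lra).
  apply rpow_inv_le; [apply sumN_rpow_abs_ge0|eapply bil_norm_ge0; eauto|lra|exact H].
Qed.

Lemma khintchine_sign_rpow q A n a : 1 <= q -> khintchine_sign q A ->
  rpow (sumsq n a) (q / 2) <= rpow A q * sign_avg n (fun eps => rpow (Rabs (rad_sum n a eps)) q).
Proof.
  intros Hq K. pose proof (khintchine_sign_ge1 q A ltac:(lra) K) as HA.
  pose proof (sumsq_ge0 n a) as Hs.
  replace (q / 2) with (1 / 2 * q) by field. rewrite <- rpow_rpow, rpow_half by exact Hs.
  eapply Rle_trans; [apply rpow_le_compat; [split; [apply sqrt_pos|apply K]|lra]|].
  assert (0 <= sign_avg n (fun eps => rpow (Rabs (rad_sum n a eps)) q))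
    by (apply sign_avg_ge0; intros; apply rpow_ge0).
  unfold rad_norm. rewrite rpow_mult_distr, rpow_inv_rpow by (lra || apply rpow_ge0). lra.
Qed.

Lemma C_sum_le p A T m N M : p_gt1 p -> khintchine_sign (ex3 p) A -> bilinear p T -> bil_norm p T m ->
  sumN N (fun i => rpow (sumN M (fun j => Rabs (T (e i) (e j)) ^ 2)) (ex3 p / 2)) <= rpow (A * m) (ex3 p).
Proof.
  intros Hp K HT Hm. pose proof (ex3_ge1 p Hp) as Hq. set (q := ex3 p) in *.
  pose proof (khintchine_sign_ge1 q A ltac:(lra) K) as HA.
  eapply Rle_trans.
  { apply sumN_le. intros i _. rewrite <- sumsq_row_coef. apply khintchine_sign_rpow; [exact Hq|exact K]. }
  rewrite sumN_scal, <- sign_avg_sumN, rpow_mult_distr by (lra || eapply bil_norm_ge0; eauto).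
  apply Rmult_le_compat_l; [apply rpow_ge0|].
  rewrite <- (sign_avg_const M (rpow m q)). apply sign_avg_le_box.
  intros eps Heps. apply row_sums_le_norm; assumption.
Qed.

Lemma C_upper p A : p_gt1 p -> khintchine_sign (ex3 p) A -> C_ineq p A.
Proof.
  intros Hp K T m HT _ Hm N M. pose proof (ex3_ge1 p Hp) as Hq.
  pose proof (khintchine_sign_ge1 (ex3 p) A ltac:(lra) K) as HA.
  pose proof (bil_norm_ge0 p T m Hm).
  rewrite ex1_ex3, ex2_ex3 by exact Hp.
  rewrite <- (rpow_rpow_inv (A * m) (ex3 p)) by (nra || lra).
  apply rpow_le_compat; [split; [apply sumN_ge0; intros; apply rpow_ge0|]|apply Rlt_le, Rdiv_lt_0_compat; lra].
  apply C_sum_le; assumption.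
Qed.

Lemma lnorm_plus_pow r M v w : 1 <= r -> 0 < lnorm r M v -> 0 < lnorm r M w ->
  sumN M (fun j => rpow (Rabs (v j + w j)) r) <= rpow (lnorm r M v + lnorm r M w) r.
Proof.
  intros Hr Ha Hb. set (a := lnorm r M v) in *. set (b := lnorm r M w) in *.
  set (l := a / (a + b)).
  assert (Hl : 0 <= l <= 1) by (unfold l; split; [apply Rdiv_le_0_compat|apply Rle_div_l]; lra).
  (* convexity of [t ^ r] at the points [|v_j| / a] and [|w_j| / b], with weights [l] and [1 - l] *)
  assert (E : forall j, rpow (Rabs (v j + w j)) r <=
            rpow (a + b) r * (l / rpow a r * rpow (Rabs (v j)) r + (1 - l) / rpow b r * rpow (Rabs (w j)) r)).
  { intros j.
    assert (Hv : 0 <= Rabs (v j) / a) by (apply Rdiv_le_0_compat; [apply Rabs_pos|lra]).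
    assert (Hw : 0 <= Rabs (w j) / b) by (apply Rdiv_le_0_compat; [apply Rabs_pos|lra]).
    eapply Rle_trans; [apply rpow_le_compat with (y := (a + b) * (l * (Rabs (v j) / a) + (1 - l) * (Rabs (w j) / b)))|].
    - split; [apply Rabs_pos|]. replace ((a + b) * _) with (Rabs (v j) + Rabs (w j)) by (unfold l; field; lra).
      apply Rabs_triang.
    - lra.
    - rewrite rpow_mult_distr by nra. apply Rmult_le_compat_l; [apply rpow_ge0|].
      eapply Rle_trans; [apply rpow_convex; auto|].
      rewrite !rpow_div by (apply Rabs_pos || lra). right. unfold Rdiv. ring. }
  eapply Rle_trans; [apply sumN_le; intros j _; apply E|].
  rewrite sumN_scal, sumN_plus, !sumN_scal, <- !lnorm_pow by lra. fold a b.
  right. field. split; apply Rgt_not_eq, rpow_gt0; lra.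
Qed.

Lemma minkowski r M v w : 1 <= r -> lnorm r M (fun j => v j + w j) <= lnorm r M v + lnorm r M w.
Proof.
  intros Hr.
  destruct (lnorm_ge0 r M v) as [Ha|Ha].
  2:{ rewrite <- Ha, Rplus_0_l. right. unfold lnorm. f_equal. apply sumN_ext. intros j Hj.
      rewrite (lnorm_eq0 r M v ltac:(lra) (eq_sym Ha) j Hj), Rplus_0_l. reflexivity. }
  destruct (lnorm_ge0 r M w) as [Hb|Hb].
  2:{ rewrite <- Hb, Rplus_0_r. right. unfold lnorm. f_equal. apply sumN_ext. intros j Hj.
      rewrite (lnorm_eq0 r M w ltac:(lra) (eq_sym Hb) j Hj), Rplus_0_r. reflexivity. }
  unfold lnorm at 1. rewrite <- (rpow_rpow_inv (lnorm r M v + lnorm r M w) r) by lra.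
  apply rpow_le_compat; [split; [apply sumN_rpow_abs_ge0|apply lnorm_plus_pow; assumption]|].
  apply Rlt_le, Rdiv_lt_0_compat; lra.
Qed.

Lemma minkowski_sumN r M N u : 1 <= r ->
  lnorm r M (fun j => sumN N (fun i => u i j)) <= sumN N (fun i => lnorm r M (u i)).
Proof.
  intros Hr. induction N as [|N IH]; simpl.
  - unfold lnorm. rewrite (sumN_ext M _ (fun _ => 0)), sumN_0, rpow_0l; [lra|].
    intros. rewrite Rabs_R0. apply rpow_0l.
  - eapply Rle_trans; [apply minkowski, Hr|]. lra.
Qed.

(* Minkowski's inequality in [l_(2/q)], [q <= 2], bounds the column sums by the row sums of
   [C_sum_le]. *)
Lemma D_upper p A : p_ge2 p -> khintchine_sign (ex3 p) A -> D_ineq p A.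
Proof.
  intros Hp2 K T m HT _ Hm N M. pose proof (p_ge2_gt1 p Hp2) as Hp.
  pose proof (ex3_ge1 p Hp) as Hq. pose proof (ex3_le2 p Hp2) as Hq2.
  pose proof (C_sum_le p A T m N M Hp K HT Hm) as C.
  pose proof (khintchine_sign_ge1 (ex3 p) A ltac:(lra) K) as HA. pose proof (bil_norm_ge0 p T m Hm).
  rewrite ex4_ex3 by exact Hp. set (q := ex3 p) in *. set (r := 2 / q).
  assert (Hr : 1 <= r) by (apply Rle_div_r; lra).
  set (u := fun i j => rpow (Rabs (T (e i) (e j))) q).
  pose proof (minkowski_sumN r M N u Hr) as Mk.
  rewrite (sumN_ext N _ (fun i => rpow (sumN M (fun j => Rabs (T (e i) (e j)) ^ 2)) (q / 2))) in Mk.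
  2:{ intros i _. unfold lnorm, u. replace (1 / r) with (q / 2) by (unfold r; field; lra). f_equal.
      apply sumN_ext. intros j _. rewrite Rabs_pos_eq, rpow_rpow by (apply rpow_ge0 || apply Rabs_pos).
      replace (q * r) with 2 by (unfold r; field; lra). apply rpow_2r, Rabs_pos. }
  replace (rpow (sumN M (fun j => rpow (sumN N (fun i => rpow (Rabs (T (e i) (e j))) q)) r)) (1 / 2))
    with (rpow (lnorm r M (fun j => sumN N (fun i => u i j))) (1 / q)).
  2:{ unfold lnorm. rewrite rpow_rpow by apply sumN_rpow_abs_ge0. replace (1 / r * (1 / q)) with (1 / 2)
        by (unfold r; field; lra).
      f_equal. apply sumN_ext. intros j _. rewrite Rabs_pos_eq by (apply sumN_ge0; intros; apply rpow_ge0).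
      reflexivity. }
  rewrite <- (rpow_rpow_inv (A * m) q) by (nra || lra).
  apply rpow_le_compat; [split; [apply lnorm_ge0|lra]|apply Rlt_le, Rdiv_lt_0_compat; lra].
Qed.

(** * Extremal forms *)

(* [sign_pattern i] reads the binary digits of [i] as signs; as [i] ranges over [0 .. 2^n - 1]
   it runs through all sign vectors of length [n]. *)
Fixpoint sign_pattern (i k : nat) : R :=
  match k with
  | O => if Nat.even i then 1 else -1
  | S k => sign_pattern (Nat.div2 i) k
  end.

Lemma sign_pattern_double i : sign_pattern (2 * i) = scons 1 (sign_pattern i).
Proof.
  apply functional_extensionality. intros [|k]; cbn [sign_pattern scons].
  - rewrite Nat.even_even. reflexivity.
  - rewrite Nat.div2_double. reflexivity.
Qed.

Lemma sign_pattern_double_succ i : sign_pattern (2 * i + 1) = scons (-1) (sign_pattern i).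
Proof.
  apply functional_extensionality. intros [|k]; cbn [sign_pattern scons].
  - rewrite Nat.even_odd. reflexivity.
  - rewrite Nat.div2_odd'. reflexivity.
Qed.

Lemma sign_pattern_pm1 i k : sign_pattern i k = 1 \/ sign_pattern i k = -1.
Proof. revert i; induction k as [|k IH]; intros i; simpl; [destruct (Nat.even i)|]; auto. Qed.

Lemma Rabs_sign_pattern i k : Rabs (sign_pattern i k) = 1.
Proof. destruct (sign_pattern_pm1 i k) as [-> | ->]; [apply Rabs_R1|apply Rabs_m1]. Qed.

Lemma sumN_sign_pattern n F : dep_first n F ->
  sumN (2 ^ n) (fun i => F (sign_pattern i)) = INR (2 ^ n) * sign_avg n F.
Proof.
  revert F; induction n as [|n IH]; intros F D.
  - simpl. rewrite (D (sign_pattern 0) (fun _ => 0)) by lia. ring.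
  - replace (2 ^ S n)%nat with (2 ^ n + 2 ^ n)%nat by (simpl; lia).
    rewrite sumN_double.
    rewrite (sumN_ext _ (fun i => F (sign_pattern (2 * i)%nat)) (fun i => F (scons 1 (sign_pattern i))))
      by (intros; rewrite sign_pattern_double; reflexivity).
    rewrite (sumN_ext _ (fun i => F (sign_pattern (2 * i + 1)%nat)) (fun i => F (scons (-1) (sign_pattern i))))
      by (intros; rewrite sign_pattern_double_succ; reflexivity).
    rewrite (IH (fun eps => F (scons 1 eps))), (IH (fun eps => F (scons (-1) eps)))
      by (apply dep_first_scons, D).
    rewrite plus_INR. cbn [sign_avg]. field.
Qed.

Definition upd (y : nat -> R) (k : nat) (z : R) : nat -> R :=
  fun j => if Nat.eq_dec j k then z else y j.

Definition weighted_moment (q : R) (n : nat) (a y : nat -> R) : R :=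
  sign_avg n (fun eps => rpow (Rabs (sumN n (fun j => a (S j) * y j * eps j))) q).

Lemma weighted_moment_ones q n a :
  weighted_moment q n a (fun _ => 1) = sign_avg n (fun eps => rpow (Rabs (rad_sum n a eps)) q).
Proof.
  apply sign_avg_ext. intros eps. f_equal. f_equal. apply sumN_ext. intros; ring.
Qed.

Lemma weighted_moment_convex q n a y k u v l : 1 <= q -> 0 <= l <= 1 ->
  weighted_moment q n a (upd y k (l * u + (1 - l) * v))
  <= l * weighted_moment q n a (upd y k u) + (1 - l) * weighted_moment q n a (upd y k v).
Proof.
  intros Hq Hl. unfold weighted_moment. rewrite <- !sign_avg_scal, <- sign_avg_plus.
  apply sign_avg_le. intros eps.
  rewrite (sumN_ext n _ (fun j => l * (a (S j) * upd y k u j * eps j) + (1 - l) * (a (S j) * upd y k v j * eps j)))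
    by (intros j _; unfold upd; destruct Nat.eq_dec; ring).
  rewrite sumN_plus, !sumN_scal.
  set (s := sumN n (fun j => a (S j) * upd y k u j * eps j)).
  set (t := sumN n (fun j => a (S j) * upd y k v j * eps j)).
  eapply Rle_trans; [apply rpow_le_compat with (y := l * Rabs s + (1 - l) * Rabs t)|].
  - split; [apply Rabs_pos|]. eapply Rle_trans; [apply Rabs_triang|].
    rewrite !Rabs_mult, (Rabs_pos_eq l), (Rabs_pos_eq (1 - l)) by lra. lra.
  - lra.
  - apply rpow_convex; auto; apply Rabs_pos.
Qed.

Lemma weighted_moment_flip q n a s : (forall k, s k = 1 \/ s k = -1) ->
  weighted_moment q n a s = weighted_moment q n a (fun _ => 1).
Proof.
  intros Hs. unfold weighted_moment.
  rewrite (sign_avg_ext n _ (fun eps => (fun eps' => rpow (Rabs (sumN n (fun j => a (S j) * 1 * eps' j))) q)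
                                          (fun k => s k * eps k)))
    by (intros eps; f_equal; f_equal; apply sumN_ext; intros; ring).
  apply (sign_avg_flip n (fun eps => rpow (Rabs (sumN n (fun j => a (S j) * 1 * eps j))) q) s Hs).
Qed.

(* A convex function on the cube is maximal at a vertex: move the coordinates [j < k] to
   [+-1] one at a time, then use the sign symmetry at the vertex. *)
Lemma weighted_moment_le_vertex q n a k y : 1 <= q -> (forall j, Rabs (y j) <= 1) ->
  (forall j, (k <= j)%nat -> y j = 1 \/ y j = -1) ->
  weighted_moment q n a y <= weighted_moment q n a (fun _ => 1).
Proof.
  intros Hq. revert y; induction k as [|k IH]; intros y Hb Hs.
  - rewrite weighted_moment_flip; [lra|]. intros; apply Hs; lia.
  - set (l := (1 + y k) / 2).
    assert (Hl : 0 <= l <= 1)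
      by (pose proof (Hb k) as Hk; unfold l; apply Rabs_le_between in Hk; lra).
    replace y with (upd y k (l * 1 + (1 - l) * -1)).
    2:{ apply functional_extensionality. intros j. unfold upd, l. destruct Nat.eq_dec; [subst; field|auto]. }
    eapply Rle_trans; [apply weighted_moment_convex; auto|].
    assert (V : forall z, Rabs z <= 1 -> (z = 1 \/ z = -1) ->
                  weighted_moment q n a (upd y k z) <= weighted_moment q n a (fun _ => 1)).
    { intros z Hz Hz'. apply IH.
      - intros j. unfold upd. destruct Nat.eq_dec; auto.
      - intros j Hj. unfold upd. destruct Nat.eq_dec; auto. apply Hs. lia. }
    pose proof (V 1 ltac:(rewrite Rabs_R1; lra) ltac:(auto)).
    pose proof (V (-1) ltac:(rewrite Rabs_m1; lra) ltac:(auto)). nra.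
Qed.

Lemma weighted_moment_le_ones q n a y : 1 <= q -> (forall j, Rabs (y j) <= 1) ->
  weighted_moment q n a y <= weighted_moment q n a (fun _ => 1).
Proof.
  intros Hq Hb. set (y' := fun j => if Compare_dec.lt_dec j n then y j else 1).
  replace (weighted_moment q n a y) with (weighted_moment q n a y').
  - apply (weighted_moment_le_vertex q n a n); [exact Hq| |].
    + intros j; unfold y'; destruct Compare_dec.lt_dec; [apply Hb|rewrite Rabs_R1; lra].
    + intros j Hj; unfold y'; destruct Compare_dec.lt_dec; [lia|auto].
  - apply sign_avg_ext. intros eps. f_equal. f_equal. apply sumN_ext. intros j Hj. unfold y'.
    destruct Compare_dec.lt_dec; [reflexivity|lia].
Qed.

Definition matrix_form (c : nat -> nat -> R) (N M : nat) : seqR -> seqR -> R :=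
  fun x y => sumN N (fun i => sumN M (fun j => c i j * x i * y j)).

Lemma matrix_form_bilinear p c N M : bilinear p (matrix_form c N M).
Proof.
  split; intros; unfold matrix_form, sadd, sscal;
    rewrite <- sumN_scal, <- sumN_plus; apply sumN_ext; intros i _;
    rewrite <- sumN_scal, <- sumN_plus; apply sumN_ext; intros; ring.
Qed.

Lemma Rabs_mul_sub_le x x' y y' d B : d <= 1 -> Rabs (x' - x) <= d -> Rabs (y' - y) <= d ->
  Rabs x <= B -> Rabs y <= B -> Rabs (x' * y' - x * y) <= d * (2 * B + 1).
Proof.
  intros Hd Dx Dy Bx By.
  replace (x' * y' - x * y) with ((x' - x) * y' + x * (y' - y)) by ring.
  eapply Rle_trans; [apply Rabs_triang|]. rewrite !Rabs_mult.
  assert (Rabs y' <= B + 1).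
  { replace y' with ((y' - y) + y) by ring. eapply Rle_trans; [apply Rabs_triang|]. lra. }
  pose proof (Rabs_pos (x' - x)). pose proof (Rabs_pos y'). pose proof (Rabs_pos x).
  pose proof (Rabs_pos (y' - y)). nra.
Qed.

Lemma matrix_form_continuous p c N M : p_gt1 p -> continuous_bil p (matrix_form c N M).
Proof.
  intros Hp x y _ _ eps Heps.
  set (C := sumN N (fun i => sumN M (fun j => Rabs (c i j)))).
  assert (HC : 0 <= C) by (apply sumN_ge0; intros; apply sumN_ge0; intros; apply Rabs_pos).
  set (B := sumN N (fun i => Rabs (x i)) + sumN M (fun j => Rabs (y j))).
  assert (Hx0 := sumN_ge0 N (fun i => Rabs (x i)) ltac:(intros; apply Rabs_pos)).
  assert (Hy0 := sumN_ge0 M (fun j => Rabs (y j)) ltac:(intros; apply Rabs_pos)).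
  assert (Bx : forall i, (i < N)%nat -> Rabs (x i) <= B).
  { intros i Hi. pose proof (sumN_ge_term N (fun i => Rabs (x i)) i ltac:(intros; apply Rabs_pos) Hi).
    unfold B; lra. }
  assert (By : forall j, (j < M)%nat -> Rabs (y j) <= B).
  { intros j Hj. pose proof (sumN_ge_term M (fun j => Rabs (y j)) j ltac:(intros; apply Rabs_pos) Hj).
    unfold B; lra. }
  set (K := (C + 1) * (2 * B + 1)).
  assert (HK : 0 < K) by (unfold K, B; nra).
  set (d := Rmin 1 (eps / (2 * K))).
  assert (Hd : 0 < d) by (apply Rmin_pos; [lra|apply Rdiv_lt_0_compat; lra]).
  exists d. split; [exact Hd|]. intros x' y' _ _ Nx Ny.
  assert (Hd1 : d <= 1) by apply Rmin_l.
  assert (Hd2 : d * K <= eps / 2).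
  { apply Rle_div_r; [lra|]. replace (eps / 2 / K) with (eps / (2 * K)) by (field; lra). apply Rmin_r. }
  pose proof (norm_le_coord p _ _ Hp Nx) as Dx. pose proof (norm_le_coord Inf _ _ I Ny) as Dy.
  unfold sadd, sopp in Dx, Dy.
  unfold matrix_form. rewrite <- sumN_minus.
  eapply Rle_lt_trans; [apply Rabs_sumN_le|].
  eapply Rle_lt_trans.
  { apply sumN_le. intros i Hi. rewrite <- sumN_minus.
    eapply Rle_trans; [apply Rabs_sumN_le|]. apply sumN_le. intros j Hj.
    replace (c i j * x' i * y' j - c i j * x i * y j) with (c i j * (x' i * y' j - x i * y j)) by ring.
    rewrite Rabs_mult. apply Rmult_le_compat_l; [apply Rabs_pos|].
    apply Rabs_mul_sub_le; [exact Hd1|apply Dx|apply Dy|apply Bx, Hi|apply By, Hj]. }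
  rewrite (sumN_ext N _ (fun i => d * (2 * B + 1) * sumN M (fun j => Rabs (c i j))))
    by (intros; rewrite <- sumN_scal; apply sumN_ext; intros; ring).
  rewrite sumN_scal. fold C. unfold K in Hd2. nra.
Qed.

Definition test_weight (q : R) (n : nat) : R := / rpow (INR (2 ^ n)) (1 / q).

Definition test_form (q : R) (n : nat) (a : nat -> R) : seqR -> seqR -> R :=
  matrix_form (fun i j => test_weight q n * sign_pattern i j * a (S j)) (2 ^ n) n.

Lemma INR_pow2_pos n : 0 < INR (2 ^ n).
Proof. apply lt_0_INR, Nat.neq_0_lt_0, Nat.pow_nonzero. lia. Qed.

Lemma test_weight_pos q n : 0 < test_weight q n.
Proof. apply Rinv_0_lt_compat, rpow_gt0, INR_pow2_pos. Qed.

Lemma test_weight_rpow q n : 0 < q -> rpow (test_weight q n) q = / INR (2 ^ n).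
Proof.
  intros Hq. unfold test_weight. rewrite rpow_Rinv by apply rpow_gt0, INR_pow2_pos.
  rewrite rpow_inv_rpow by (apply Rlt_le, INR_pow2_pos || exact Hq). reflexivity.
Qed.

Lemma sumN_mul_e N k f : (k < N)%nat -> sumN N (fun i => f i * e k i) = f k.
Proof.
  induction N as [|N IH]; intros Hk; [lia|]. simpl. unfold e at 2.
  destruct (Nat.eq_dec N k) as [->|Hne].
  - rewrite (sumN_ext k _ (fun _ => 0)), sumN_0; [ring|].
    intros i Hi. unfold e. destruct Nat.eq_dec; [lia|ring].
  - rewrite IH by lia. ring.
Qed.

Lemma test_form_e q n a i j : (i < 2 ^ n)%nat -> (j < n)%nat ->
  test_form q n a (e i) (e j) = test_weight q n * sign_pattern i j * a (S j).
Proof.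
  intros Hi Hj. unfold test_form, matrix_form.
  rewrite (sumN_ext (2 ^ n) _ (fun i' => test_weight q n * sign_pattern i' j * a (S j) * e i i')).
  - apply (sumN_mul_e _ i (fun i' => test_weight q n * sign_pattern i' j * a (S j)) Hi).
  - intros i' _. apply (sumN_mul_e n j (fun j' => test_weight q n * sign_pattern i' j' * a (S j') * e i i') Hj).
Qed.

(* Hoelder in [x], then the row sums are the values of a Rademacher sum weighted by [y]. *)
Lemma test_form_bound p n a x y : p_gt1 p -> in_ball p x -> in_ball Inf y ->
  Rabs (test_form (ex3 p) n a x y) <= rad_norm (ex3 p) n a.
Proof.
  intros Hp Hx Hy. pose proof (ex3_ge1 p Hp) as Hq. set (q := ex3 p) in *.
  set (b := fun i => test_weight q n * sumN n (fun j => a (S j) * y j * sign_pattern i j)).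
  replace (test_form q n a x y) with (sumN (2 ^ n) (fun i => x i * b i)).
  2:{ apply sumN_ext. intros i _. unfold b. rewrite <- !sumN_scal. apply sumN_ext. intros j _. ring. }
  eapply Rle_trans; [apply (holder p); assumption|].
  unfold lnorm, rad_norm. apply rpow_le_compat; [split; [apply sumN_rpow_abs_ge0|]|apply Rlt_le, Rdiv_lt_0_compat; lra].
  set (G := fun eps => rpow (Rabs (sumN n (fun j => a (S j) * y j * eps j))) q).
  rewrite (sumN_ext (2 ^ n) _ (fun i => / INR (2 ^ n) * G (sign_pattern i))).
  2:{ intros i _. unfold b, G. rewrite Rabs_mult, rpow_mult_distr by apply Rabs_pos.
      rewrite Rabs_pos_eq, test_weight_rpow by (apply Rlt_le, test_weight_pos || (fold q; lra)). reflexivity. }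
  rewrite sumN_scal, sumN_sign_pattern.
  2:{ intros e1 e2 H. unfold G. f_equal. f_equal. apply sumN_ext. intros. rewrite H; auto. }
  rewrite <- Rmult_assoc, Rinv_l, Rmult_1_l by apply Rgt_not_eq, INR_pow2_pos.
  fold (weighted_moment q n a y). rewrite <- weighted_moment_ones.
  apply weighted_moment_le_ones; [exact Hq|]. apply (norm_le_coord Inf y 1 I), Hy.
Qed.

Lemma test_form_norm p n a : p_gt1 p ->
  exists m, bil_norm p (test_form (ex3 p) n a) m /\ m <= rad_norm (ex3 p) n a.
Proof.
  intros Hp.
  set (V := fun v => exists x y, in_ball p x /\ in_ball Inf y /\ v = Rabs (test_form (ex3 p) n a x y)).
  assert (B : forall v, V v -> v <= rad_norm (ex3 p) n a)
    by (intros v (x & y & Hx & Hy & ->); apply test_form_bound; assumption).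
  assert (Ne : exists v, V v)
    by (eexists; exists (fun _ => 0), (fun _ => 0); split; [apply in_ball_zero|split; [apply in_ball_zero|reflexivity]]).
  destruct (completeness V (ex_intro _ _ B) Ne) as [m Hm].
  exists m. split; [exact Hm|apply (proj2 Hm); exact B].
Qed.

Lemma C_test_sum p n a : p_gt1 p ->
  rpow (sumN (2 ^ n) (fun i => rpow (sumN n (fun j => Rabs (test_form (ex3 p) n a (e i) (e j)) ^ 2)) (ex1 p)))
       (ex2 p)
  = sqrt (sumsq n a).
Proof.
  intros Hp. pose proof (ex3_ge1 p Hp) as Hq. rewrite ex1_ex3, ex2_ex3 by exact Hp. set (q := ex3 p) in *.
  rewrite (sumN_ext (2 ^ n) _ (fun _ => / INR (2 ^ n) * rpow (sumsq n a) (q / 2))).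
  - rewrite sumN_const, <- Rmult_assoc, Rinv_r, Rmult_1_l by apply Rgt_not_eq, INR_pow2_pos.
    rewrite rpow_rpow by apply sumsq_ge0. replace (q / 2 * (1 / q)) with (1 / 2) by (field; lra).
    apply rpow_half, sumsq_ge0.
  - intros i Hi. rewrite (sumN_ext n _ (fun j => rpow (test_weight q n) 2 * a (S j) ^ 2)).
    + rewrite sumN_scal. fold (sumsq n a).
      rewrite rpow_mult_distr, rpow_rpow by (apply rpow_ge0 || apply sumsq_ge0 || apply Rlt_le, test_weight_pos).
      replace (2 * (q / 2)) with q by field. rewrite test_weight_rpow by lra. reflexivity.
    + intros j Hj. rewrite test_form_e, pow2_abs, rpow_2r by (auto || apply Rlt_le, test_weight_pos).
      rewrite !Rpow_mult_distr. replace (sign_pattern i j ^ 2) with (Rabs (sign_pattern i j) ^ 2)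
        by apply pow2_abs.
      rewrite Rabs_sign_pattern. ring.
Qed.

Lemma D_test_sum p n a : p_gt1 p ->
  rpow (sumN n (fun j => rpow (sumN (2 ^ n) (fun i => rpow (Rabs (test_form (ex3 p) n a (e i) (e j))) (ex3 p)))
                             (ex4 p)))
       (1 / 2)
  = sqrt (sumsq n a).
Proof.
  intros Hp. pose proof (ex3_ge1 p Hp) as Hq. rewrite ex4_ex3 by exact Hp. set (q := ex3 p) in *.
  rewrite <- rpow_half by apply sumsq_ge0. f_equal. apply sumN_ext. intros j Hj.
  rewrite (sumN_ext (2 ^ n) _ (fun _ => / INR (2 ^ n) * rpow (Rabs (a (S j))) q)).
  - rewrite sumN_const, <- Rmult_assoc, Rinv_r, Rmult_1_l by apply Rgt_not_eq, INR_pow2_pos.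
    rewrite rpow_rpow by apply Rabs_pos. replace (q * (2 / q)) with 2 by (field; lra).
    rewrite rpow_2r by apply Rabs_pos. apply pow2_abs.
  - intros i Hi. rewrite test_form_e by auto. rewrite !Rabs_mult, Rabs_sign_pattern, Rmult_1_r.
    rewrite rpow_mult_distr, Rabs_pos_eq, test_weight_rpow
      by (lra || apply Rabs_pos || apply Rlt_le, test_weight_pos).
    reflexivity.
Qed.

Lemma khintchine_sign_of_forms q A : 0 < q ->
  (forall n a, exists m, 0 <= m <= rad_norm q n a /\ sqrt (sumsq n a) <= A * m) -> khintchine_sign q A.
Proof.
  intros Hq H.
  assert (HA : 0 < A).
  { destruct (H 1%nat (fun _ => 1)) as (m & Hm & Hs).
    rewrite rad_norm_unit in Hm by exact Hq. unfold sumsq in Hs. simpl in Hs.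
    rewrite Rplus_0_l, !Rmult_1_l, sqrt_1 in Hs. nra. }
  intros n a. destruct (H n a) as (m & Hm & Hs).
  eapply Rle_trans; [exact Hs|]. apply Rmult_le_compat_l; lra.
Qed.

Lemma C_lower p A : p_gt1 p -> C_ineq p A -> khintchine_sign (ex3 p) A.
Proof.
  intros Hp HC. apply khintchine_sign_of_forms; [pose proof (ex3_ge1 p Hp); lra|]. intros n a.
  destruct (test_form_norm p n a Hp) as (m & Hm & Hle). exists m.
  split; [split; [eapply bil_norm_ge0; eauto|exact Hle]|].
  rewrite <- (C_test_sum p n a Hp).
  apply HC; [apply matrix_form_bilinear|apply matrix_form_continuous, Hp|exact Hm].
Qed.

Lemma D_lower p A : p_gt1 p -> D_ineq p A -> khintchine_sign (ex3 p) A.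
Proof.
  intros Hp HD. apply khintchine_sign_of_forms; [pose proof (ex3_ge1 p Hp); lra|]. intros n a.
  destruct (test_form_norm p n a Hp) as (m & Hm & Hle). exists m.
  split; [split; [eapply bil_norm_ge0; eauto|exact Hle]|].
  rewrite <- (D_test_sum p n a Hp).
  apply HD; [apply matrix_form_bilinear|apply matrix_form_continuous, Hp|exact Hm].
Qed.

Lemma is_optimal_equiv (P Q : R -> Prop) A : (forall A', P A' <-> Q A') -> is_optimal P A -> is_optimal Q A.
Proof. intros E [HP Hmin]. split; [apply E, HP|]. intros A' HQ. apply Hmin, E, HQ. Qed.

Theorem mainTheorem4 (p : ext) (hp : p_ge2 p) :
  exists A : R,
    is_optimal (khintchine_ineq (ex3 p)) A /\
    is_optimal (C_ineq p) A /\
    is_optimal (D_ineq p) A.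
Proof.
  pose proof (p_ge2_gt1 p hp) as Hp.
  destruct (khintchine_sign_optimal (ex3 p) (ex3_ge1 p Hp)) as [A HA].
  exists A. split; [|split]; apply (is_optimal_equiv (khintchine_sign (ex3 p))); auto.
  - intros A'. symmetry. apply khintchine_ineq_iff_sign.
  - intros A'. split; [apply C_upper, Hp|apply C_lower, Hp].
  - intros A'. split; [apply D_upper, hp|apply D_lower, Hp].
Qed.
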